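(* (1) Every cograph is equivalent to a fat intersection cograph. (2a) Every finite cograph is equivalent to an inner product cograph. (2b) Every finite cograph is equivalent to a polynomial cograph. (3) Every finite cograph is equivalent to a geometric cograph in $\mathbb{R}^d$ for some (sufficiently large) $d$.
   Context: A cograph is a function $\mathcal{C}:\mathcal{P}^{(2)}\to\mathcal{E}$, where $\mathcal{P}$ is a set (''points''), $\mathcal{P}^{(2)}$ is the set of unordered pairs of distinct points, and $\mathcal{E}$ is a set (''edges''); one writes $\mathcal{C}(P,Q)$ for the value on $\{P,Q\}$. It is finite if $\mathcal{P}$ is finite. Two cographs $\mathcal{C}$ on $\mathcal{P}$ and $\mathcal{C}'$ on $\mathcal{P}'$ are equivalent if there is a bijection $\varphi:\mathcal{P}\to\mathcal{P}'$ such that for all pairs of distinct points, $\mathcal{C}(P,Q)=\mathcal{C}(R,S)$ iff $\mathcal{C}'(\varphi P,\varphi Q)=\mathcal{C}'(\varphi R,\varphi S)$ (i.e. cographs are considered up to relabeling points and edges). A fat intersection cograph is given by a collection $\mathcal{P}$ of distinct sets (the points) and a collection $\mathcal{S}$ of sets closed under intersection and containing $U=\bigcup_{P\in\mathcal{P}}P$; its edge $\mathcal{C}(P,Q)$ is the smallest set in $\mathcal{S}$ containing $P\cap Q$. An inner product cograph has as points distinct vectors of a real inner product space, with $\mathcal{C}(P,Q)=(P,Q)$ the inner product. A polynomial cograph has as points distinct elements of $\mathbb{Z}$ (or of $\mathbb{Z}_m$ for some $m$), with $\mathcal{C}(P,Q)=f(P,Q)$ for a fixed symmetric polynomial $f$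 in two variables with integer coefficients. A geometric cograph in $\mathbb{R}^d$ has as points distinct points of $\mathbb{R}^d$, with $\mathcal{C}(P,Q)$ the Euclidean distance between $P$ and $Q$. *)

From HB Require Import structures.
From mathcomp Require Import all_boot all_order all_algebra.
From mathcomp Require Import Rstruct.
From mathcomp Require Import mpoly.
From Stdlib Require Import Rdefinitions.
Set Implicit Arguments. Unset Strict Implicit. Unset Printing Implicit Defensive.
Import Order.TTheory GRing.Theory Num.Theory.

(* A cograph with point type P and edge type E is a map on unordered pairs of
   distinct points.  We model it as a symmetric binary map [C : P -> P -> E];
   its values on the diagonal are irrelevant (never used). *)
Definition is_cograph (P E : Type) (C : P -> P -> E) : Prop :=
  forall x y, C x y = C y x.

(* [C] is equivalent, via the injective labelling [f : P -> Q], to the cograph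
   [C'] restricted to the point set [f(P)] (the image of f, a set of distinct
   elements of Q); f is then a bijection from P onto this point set. *)
Definition equiv_via (P E Q E' : Type) (C : P -> P -> E) (f : P -> Q)
    (C' : Q -> Q -> E') : Prop :=
  injective f /\
    forall p q r s, p <> q -> r <> s ->
      (C p q = C r s <-> C' (f p) (f q) = C' (f r) (f s)).

Definition setI_ (X : Type) (A B : X -> Prop) : X -> Prop := fun x => A x /\ B x.
Definition subset_ (X : Type) (A B : X -> Prop) : Prop := forall x, A x -> B x.

Definition fat_system (P X : Type) (pts : P -> (X -> Prop))
    (S : (X -> Prop) -> Prop) : Prop :=
  (forall A B, S A -> S B -> S (setI_ A B)) /\
  S (fun x => exists p, pts p x).

(* The edge of the fat intersection cograph on the points A, B: the smallest
   set of S containing A :&: B.  When such a smallest set exists it is the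
   intersection of all sets of S containing A :&: B, which is what we write
   here; its existence (membership in S) is required in [fat_intersection]. *)
Definition fat_edge (X : Type) (S : (X -> Prop) -> Prop) (A B : X -> Prop) : X -> Prop :=
  fun x => forall B', S B' -> subset_ (setI_ A B) B' -> B' x.

Definition fat_intersection (P X : Type) (pts : P -> (X -> Prop))
    (S : (X -> Prop) -> Prop) : Prop :=
  fat_system pts S /\
  forall p q, p <> q -> S (fat_edge S (pts p) (pts q)).

Local Open Scope ring_scope.

Definition is_inner_product (V : lmodType R) (ip : V -> V -> R) : Prop :=
  (forall u v, ip u v = ip v u) /\
  (forall (a : R) u v w, ip (a *: u + v) w = a * ip u w + ip v w) /\
  (forall u, u != 0 -> 0 < ip u u).

Definition val2 (T : Type) (x y : T) : 'I_2 -> T :=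
  fun i => if val i == 0%N then x else y.

Definition poly_cog_Z (f : {mpoly int[2]}) (x y : int) : int := f.@[val2 x y].

Definition poly_cog_Zm (m : nat) (f : {mpoly int[2]}) (x y : 'Z_m) : 'Z_m :=
  mmap (fun z : int => z%:~R) (val2 x y) f.

Definition euclid_dist (d : nat) (u v : 'rV[R]_d) : R :=
  Num.sqrt (\sum_(i < d) (u ord0 i - v ord0 i) ^+ 2).

From HB Require Import structures.
From mathcomp Require Import all_boot all_order all_algebra.
From mathcomp Require Import Rstruct.
From mathcomp Require Import mpoly.
From Stdlib Require Import Rdefinitions.
From mathcomp Require Import perm boolp ring.
Import GRing.Theory Num.Theory.

Set Implicit Arguments.
Unset Strict Implicit.
Unset Printing Implicit Defensive.

(* (1) Represent each point p by the set of ordered pairs of points meeting p, and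
   let the closed sets be the whole space, the empty set and, for every edge e,
   the ordered pairs of distinct points joined by e.  Two points meet in {(p,q),
   (q,p)}, and the smallest closed set containing it is the class of the edge
   C(p,q), so equal edges give equal fat edges and conversely.

   For a finite cograph, first code each edge by a natural number (the position
   of its first representative in an enumeration of the pairs); it then suffices
   to realise a symmetric matrix h : P -> P -> nat off the diagonal.
   (2a) Index coordinates by ordered pairs and give p the entry h(p,q)/2 at (p,q)
   and 1 at (q,p): the inner product of the vectors of p <> q is h(p,q).
   (3) Padding every vector with a private coordinate makes all squared norms
   equal to some N, so the squared distance of p <> q is 2N - 2h(p,q).
   (2b) With integer Lagrange polynomials L_s vanishing at every node but the
   one of s, where they take the value D_s, the symmetric polynomial
   sum_(s,t) c(s,t) L_s(x) L_t(y) takes the value c(u,t) D_u D_t at the nodes of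
   (u,t); choosing c(s,t) = h(s,t) prod_(r <> s,t) D_r makes it h(u,t) times the
   nonzero constant prod_r D_r. *)

Section Equivalence.
Variables (P Q V E F G : Type) (C : P -> P -> E).

Lemma equiv_via_comp (f : P -> Q) (C' : Q -> Q -> F) (g : Q -> V) (C'' : V -> V -> G) :
  equiv_via C f C' -> equiv_via C' g C'' -> equiv_via C (g \o f) C''.
Proof.
move=> [f_inj eqCC'] [g_inj eqC'C'']; split; first exact: inj_comp.
move=> p q r s pq rs; rewrite eqCC' // eqC'C'' //.
all: by move=> /f_inj.
Qed.

Lemma equiv_via_of_eq (f : P -> Q) (C' : Q -> Q -> F) (phi : E -> F) :
  injective f -> injective phi ->
  (forall p q, p <> q -> C' (f p) (f q) = phi (C p q)) -> equiv_via C f C'.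
Proof.
move=> f_inj phi_inj C'E; split=> // p q r s pq rs; rewrite !C'E //.
by split=> [-> //|/phi_inj].
Qed.

End Equivalence.

Section FiniteCode.
Variables (P : finType) (E : Type) (C : P -> P -> E).
Hypothesis C_sym : is_cograph C.

Definition edge_code (p q : P) : nat :=
  find (fun w : P * P => (w.1 != w.2) && `[< C w.1 w.2 = C p q >]) (enum {: P * P}).

Lemma edge_code_sym p q : edge_code p q = edge_code q p.
Proof. by apply: eq_find => w; rewrite (C_sym p q). Qed.

Lemma equiv_via_edge_code : equiv_via C id edge_code.
Proof.
split; first by [].
move=> p q r s /eqP pq /eqP rs; split=> [Cpq|code_eq].
  by apply: eq_find => w; rewrite Cpq.
have has_rep u v : u != v ->
    has (fun w : P * P => (w.1 != w.2) && `[< C w.1 w.2 = C u v >]) (enum {: P * P}).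
  by move=> uv; apply/hasP; exists (u, v); rewrite ?mem_enum //= uv; apply/asboolP.
have /andP[_ /asboolP <-] := nth_find (p, p) (has_rep _ _ pq).
have /andP[_ /asboolP <-] := nth_find (p, p) (has_rep _ _ rs).
by move: code_eq; rewrite /edge_code => ->.
Qed.

End FiniteCode.

Lemma fat_edgeE (X : Type) (S : (X -> Prop) -> Prop) (A B M : X -> Prop) :
  S M -> subset_ (setI_ A B) M ->
  (forall B', S B' -> subset_ (setI_ A B) B' -> subset_ M B') ->
  fat_edge S A B = M.
Proof.
move=> SM ABM M_min; apply/funext => x; apply/propext.
by split=> [/(_ M SM ABM) //|Mx B' SB' ABB']; apply: M_min.
Qed.

Section FatIntersection.
Variables (P E : Type) (C : P -> P -> E).
Hypothesis C_sym : is_cograph C.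

Definition incident (p : P) : P * P -> Prop := fun x => x.1 = p \/ x.2 = p.

Definition edge_class (e : E) : P * P -> Prop := fun x => x.1 <> x.2 /\ C x.1 x.2 = e.

Definition edge_system (A : P * P -> Prop) : Prop :=
  (forall x, A x) \/ (exists e, forall x, A x <-> edge_class e x) \/ (forall x, ~ A x).

Lemma edge_system_class e : edge_system (edge_class e).
Proof. by right; left; exists e. Qed.

Lemma edge_system_setI A B :
  edge_system A -> edge_system B -> edge_system (setI_ A B).
Proof.
case=> [Afull|[[e Ae]|Aempty]]; last by right; right=> x [/Aempty].
all: case=> [Bfull|[[e' Be]|Bempty]]; last by right; right=> x [_ /Bempty].
- by left.
- by right; left; exists e'=> x; split=> [[_ /Be]|/Be Bx] //; split.
- by right; left; exists e=> x; split=> [[/Ae]|/Ae Ax] //; split.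
have [ee'|ee'] := asboolP (e = e'); first subst e'.
  by right; left; exists e=> x; split=> [[/Ae]|Cx] //; split; [apply/Ae|apply/Be].
by right; right=> x [/Ae[_ Cx] /Be[_ Cx']]; apply: ee'; rewrite -Cx -Cx'.
Qed.

Lemma fat_system_edge : fat_system incident edge_system.
Proof. by split; [exact: edge_system_setI|left=> x; exists x.1; left]. Qed.

Lemma fat_edge_incident p q : p <> q ->
  fat_edge edge_system (incident p) (incident q) = edge_class (C p q).
Proof.
move=> pq; have pq_meet : setI_ (incident p) (incident q) (p, q) by split; [left|right].
apply: fat_edgeE; first exact: edge_system_class.
  rewrite /subset_ /setI_ /incident /edge_class => -[a b] /= [[->|->] [aq|bq]].
  - by case: pq.
  - by rewrite bq.
  - by rewrite aq; split=> [/esym|]; [exact: pq|exact: C_sym].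
  - by case: pq.
move=> B' [B'full|[[e B'e]|B'empty]] meetB' x Cx //.
  by have /B'e [_ /= Cpq] := meetB' _ pq_meet; apply/B'e; rewrite -Cpq.
by case: (B'empty _ (meetB' _ pq_meet)).
Qed.

Lemma incident_inj : injective incident.
Proof. by move=> p q pq; have [] : incident q (p, p) by rewrite -pq; left. Qed.

Lemma fat_intersection_edge : fat_intersection incident edge_system.
Proof.
split; first exact: fat_system_edge.
by move=> p q pq; rewrite fat_edge_incident //; apply: edge_system_class.
Qed.

Lemma equiv_via_incident : equiv_via C incident (fat_edge edge_system).
Proof.
split=> [|p q r s pq rs]; first exact: incident_inj.
rewrite !fat_edge_incident //; split=> [-> //|classes_eq].
by have [_ /= ->] : edge_class (C r s) (p, q) by rewrite -classes_eq.
Qed.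

End FatIntersection.

Local Open Scope ring_scope.

Definition dotmx n (u v : 'rV[R]_n) : R := \sum_i u ord0 i * v ord0 i.

Lemma dotmx_is_inner_product n : is_inner_product (@dotmx n).
Proof.
split; first by move=> u v; apply: eq_bigr => i _; rewrite mulrC.
split=> [a u v w|u u_neq0].
  rewrite /dotmx mulr_sumr -big_split; apply: eq_bigr => i _.
  by rewrite !mxE mulrDl mulrA.
have [i ui_neq0] : exists i, u ord0 i != 0.
  apply/existsP; apply: contraR u_neq0 => /existsPn u0.
  by apply/eqP/rowP => i; rewrite mxE; apply/eqP/negPn.
rewrite /dotmx (bigD1 i) //= ltr_pwDl ?sumr_ge0 // => [|j _].
  by rewrite -expr2 exprn_even_gt0.
by rewrite -expr2 sqr_ge0.
Qed.

Lemma dotmx_ge0 n (u : 'rV[R]_n) : 0 <= dotmx u u.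
Proof. by apply: sumr_ge0 => i _; rewrite -expr2 sqr_ge0. Qed.

Lemma dotmxBB n (u v : 'rV[R]_n) :
  dotmx (u - v) (u - v) = dotmx u u + dotmx v v - 2 * dotmx u v.
Proof.
rewrite /dotmx mulr_sumr -big_split -sumrB /=; apply: eq_bigr => i _.
by rewrite !mxE; ring.
Qed.

Lemma dotmx_row_mx m n (u u' : 'rV[R]_m) (v v' : 'rV[R]_n) :
  dotmx (row_mx u v) (row_mx u' v') = dotmx u u' + dotmx v v'.
Proof.
rewrite /dotmx big_split_ord /=.
by congr (_ + _); apply: eq_bigr => i _; rewrite ?row_mxEl ?row_mxEr.
Qed.

Lemma dotmx_row_enum (T : finType) (F G : T -> R) :
  dotmx (\row_(i < #|{: T}|) F (enum_val i)) (\row_i G (enum_val i)) = \sum_x F x * G x.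
Proof.
rewrite /dotmx (big_enum_val (fun x => F x * G x)) /=.
by apply: eq_bigr => i _; rewrite !mxE.
Qed.

Lemma euclid_distE d : @euclid_dist d = fun u v => Num.sqrt (dotmx (u - v) (u - v)).
Proof.
apply/funext => u; apply/funext => v; congr Num.sqrt.
by apply: eq_bigr => i _; rewrite !mxE expr2.
Qed.

Lemma natr_inj : injective (fun n : nat => n%:R : R).
Proof. by move=> m n /eqP; rewrite eqr_nat => /eqP. Qed.

Lemma equiv_via_sqrt (P Q E : Type) (C : P -> P -> E) (f : P -> Q) (D : Q -> Q -> R) :
  (forall u v, 0 <= D u v) -> equiv_via C f D ->
  equiv_via C f (fun u v => Num.sqrt (D u v)).
Proof.
move=> D_ge0 [f_inj CD]; split=> // p q r s pq rs; rewrite CD //.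
by split=> [-> //|/eqP]; rewrite eqr_sqrt // => /eqP.
Qed.

Section GramRealization.
Variables (P : finType) (h : P -> P -> R).
Hypothesis h_sym : forall p q, h p q = h q p.

Definition gram_entry (p : P) (x : P * P) : R :=
  if x.1 == p then (if x.2 == p then 1 else h p x.2 / 2) else (x.2 == p)%:R.

Definition gram_vec (p : P) : 'rV[R]_#|{: P * P}| := \row_i gram_entry p (enum_val i).

Lemma gram_entry_mul p q x : p != q -> gram_entry p x * gram_entry q x =
  (if x == (p, q) then h p q / 2 else 0) + (if x == (q, p) then h q p / 2 else 0).
Proof.
move=> pq; have qp : q != p by rewrite eq_sym.
case: x => a b; rewrite /gram_entry !xpair_eqE /=.
have [->|ap] := eqVneq a p; have [->|bp] := eqVneq b p;
  rewrite ?eqxx ?(negbTE pq) ?(negbTE qp) /= ?andbT ?andbF;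
  rewrite ?mulr1 ?mul1r ?addr0 ?add0r ?mul0r ?mulr0 //.
by have [->|bq] := eqVneq b q; rewrite ?mulr1 ?mulr0.
Qed.

Lemma dotmx_gram_vec p q : p != q -> dotmx (gram_vec p) (gram_vec q) = h p q.
Proof.
move=> pq; rewrite dotmx_row_enum.
under eq_bigr => x _ do rewrite (gram_entry_mul _ pq).
by rewrite big_split /= -!big_mkcond !big_pred1_eq /= h_sym -splitr.
Qed.

Lemma gram_vec_inj : injective gram_vec.
Proof.
move=> p q /rowP /(_ (enum_rank (p, p))); rewrite !mxE enum_rankK /gram_entry /= eqxx.
by have [//|_] := eqVneq p q; move=> /eqP; rewrite oner_eq0.
Qed.

End GramRealization.

Section EqualNormLift.
Variables (P : finType) (n : nat) (u : P -> 'rV[R]_n).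

Definition sqnorm_total : R := \sum_p dotmx (u p) (u p).

Definition lift_pad (p x : P) : R :=
  if x == p then Num.sqrt (sqnorm_total - dotmx (u p) (u p)) else 0.

Definition lift_vec (p : P) : 'rV[R]_(n + #|{: P}|) :=
  row_mx (u p) (\row_i lift_pad p (enum_val i)).

Lemma dotmx_lift_vec p q :
  dotmx (lift_vec p) (lift_vec q) = if p == q then sqnorm_total else dotmx (u p) (u q).
Proof.
rewrite dotmx_row_mx dotmx_row_enum /lift_pad.
have [<-|pq] := eqVneq p q; last first.
  rewrite big1 ?addr0 // => x _.
  by have [->|xp] := eqVneq x p; rewrite ?(negbTE pq) ?mulr0 ?mul0r.
rewrite (bigD1 p) //= eqxx big1 => [|x /negbTE -> //]; last by rewrite mul0r.
rewrite -expr2 sqr_sqrtr ?addr0; first by rewrite addrC subrK.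
rewrite subr_ge0 /sqnorm_total (bigD1 p) //= lerDl.
by apply: sumr_ge0 => x _; apply: dotmx_ge0.
Qed.

Lemma dotmx_lift_vecBB p q : p != q ->
  dotmx (lift_vec p - lift_vec q) (lift_vec p - lift_vec q) =
    2 * sqnorm_total - 2 * dotmx (u p) (u q).
Proof. by move=> pq; rewrite dotmxBB !dotmx_lift_vec !eqxx (negbTE pq); ring. Qed.

Lemma lift_vec_inj : injective u -> injective lift_vec.
Proof. by move=> u_inj p q /eq_row_mx [/u_inj]. Qed.

End EqualNormLift.

Lemma perm2_cases (s : 'S_2) :
  (s ord0 = ord0 /\ s ord_max = ord_max) \/ (s ord0 = ord_max /\ s ord_max = ord0).
Proof.
have s0_neq_s1 : s ord0 != s ord_max by rewrite (inj_eq perm_inj).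
have I2 (i : 'I_2) : i = ord0 \/ i = ord_max.
  by case: i => [[|[|//]] lt_i2]; [left|right]; apply: val_inj.
by case: (I2 (s ord0)) (I2 (s ord_max)) s0_neq_s1 => -> [] ->; auto.
Qed.

Lemma bigD2 (T : Type) (idx : T) (op : Monoid.com_law idx) (I : finType)
    (F : I -> T) p q : p != q ->
  \big[op/idx]_r F r = op (op (F p) (F q)) (\big[op/idx]_(r | (r != p) && (r != q)) F r).
Proof.
move=> pq; rewrite (bigD1 p) // (bigD1 q) 1?eq_sym //= Monoid.mulmA.
by congr (op _ _); apply: eq_bigl => r; rewrite andbC.
Qed.

Section Interpolation.
Variables (P : finType) (c : P -> P -> int).
Hypothesis c_sym : forall s t, c s t = c t s.

Definition node (p : P) : int := (enum_rank p : nat)%:Z.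

Lemma node_inj : injective node.
Proof. by move=> p q [] /val_inj /enum_rank_inj. Qed.

Definition lagrange (i : 'I_2) (s : P) : {mpoly int[2]} :=
  \prod_(r | r != s) ('X_i - (node r)%:MP).

Definition lagrange_denom (s : P) : int := \prod_(r | r != s) (node s - node r).

Lemma lagrange_denom_neq0 s : lagrange_denom s != 0.
Proof.
apply/prodf_neq0 => r rs; rewrite subr_eq0.
by apply: contra rs => /eqP /node_inj ->.
Qed.

Lemma meval_lagrange (v : 'I_2 -> int) i s z : v i = node z ->
  (lagrange i s).@[v] = if s == z then lagrange_denom z else 0.
Proof.
move=> viz; rewrite /lagrange rmorph_prod.
under eq_bigr => r _ do rewrite rmorphB /= mevalXU mevalC viz.
have [-> //|sz] := eqVneq s z.
by rewrite (bigD1 z) 1?eq_sym //= subrr mul0r.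
Qed.

Lemma msym_lagrange (s : 'S_2) i p : msym s (lagrange i p) = lagrange (s i) p.
Proof.
rewrite /lagrange rmorph_prod; apply: eq_bigr => r _.
by rewrite rmorphB /= /msym mmapX mmap1U mmapC.
Qed.

Definition interp_poly : {mpoly int[2]} :=
  \sum_s \sum_t c s t *: (lagrange ord0 s * lagrange ord_max t).

Lemma interp_poly_sym : interp_poly \is symmetric.
Proof.
apply/issymP => s; rewrite /interp_poly raddf_sum.
under eq_bigr => p _ do rewrite raddf_sum /=.
under eq_bigr => p _ do under eq_bigr => q _ do rewrite msymZ msymM !msym_lagrange.
case: (perm2_cases s) => [[-> ->] //|[-> ->]].
rewrite exchange_big; apply: eq_bigr => p _; apply: eq_bigr => q _.
by rewrite c_sym mulrC.
Qed.

Lemma interp_polyE u t :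
  poly_cog_Z interp_poly (node u) (node t) = c u t * (lagrange_denom u * lagrange_denom t).
Proof.
rewrite /poly_cog_Z /interp_poly raddf_sum /=.
under eq_bigr => s _ do rewrite raddf_sum /=.
under eq_bigr => s _ do under eq_bigr => r _ do
  rewrite mevalZ mevalM (@meval_lagrange _ ord0 s u) // (@meval_lagrange _ ord_max r t) //.
rewrite (bigD1 u) //= [X in _ + X]big1 ?addr0; last first.
  by move=> s /negbTE su; rewrite big1 // => r _; rewrite su mul0r mulr0.
rewrite (bigD1 t) //= big1 ?addr0; last by move=> r /negbTE rt; rewrite rt !mulr0.
by rewrite !eqxx.
Qed.

End Interpolation.

Section FiniteCographs.
Variables (P : finType) (E : Type) (C : P -> P -> E).
Hypothesis C_sym : is_cograph C.

Let code := edge_code C.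
Let code_real (p q : P) : R := (code p q)%:R.

Lemma equiv_via_code (Q F : Type) (f : P -> Q) (C' : Q -> Q -> F) :
  equiv_via code f C' -> equiv_via C f C'.
Proof. by move=> code_f; have := equiv_via_comp (equiv_via_edge_code C) code_f. Qed.

Lemma code_real_sym p q : code_real p q = code_real q p.
Proof. by rewrite /code_real /code (edge_code_sym C_sym). Qed.

Lemma inner_product_cograph :
  exists (V : lmodType R) (ip : V -> V -> R) (f : P -> V),
    is_inner_product ip /\ equiv_via C f ip.
Proof.
exists 'rV[R]_#|{: P * P}|, (@dotmx _), (gram_vec code_real).
split; first exact: dotmx_is_inner_product.
apply: equiv_via_code.
apply: (equiv_via_of_eq (phi := fun n : nat => n%:R)); first exact: gram_vec_inj.
  exact: natr_inj.
by move=> p q /eqP pq; rewrite dotmx_gram_vec //; exact: code_real_sym.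
Qed.

Lemma geometric_cograph :
  exists (d : nat) (f : P -> 'rV[R]_d), equiv_via C f (@euclid_dist d).
Proof.
pose u := gram_vec code_real; exists _, (lift_vec u); rewrite euclid_distE.
apply: equiv_via_sqrt => [a b|]; first exact: dotmx_ge0.
apply: equiv_via_code.
apply: (equiv_via_of_eq (phi := fun n : nat => 2 * sqnorm_total u - 2 * n%:R)).
- exact/lift_vec_inj/gram_vec_inj.
- by move=> m n /addrI /oppr_inj /mulfI; rewrite pnatr_eq0 => /(_ isT) /natr_inj.
- move=> p q /eqP pq; rewrite dotmx_lift_vecBB // dotmx_gram_vec //; exact: code_real_sym.
Qed.

Lemma polynomial_cograph : exists g : {mpoly int[2]}, g \is symmetric /\
  ((exists f : P -> int, equiv_via C f (poly_cog_Z g)) \/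
   (exists (m : nat) (f : P -> 'Z_m), (1 < m)%nat /\ equiv_via C f (poly_cog_Zm g))).
Proof.
pose D := @lagrange_denom P.
have D_neq0 : \prod_r D r != 0 by apply/prodf_neq0 => r _; apply: lagrange_denom_neq0.
pose c s t := (code s t)%:Z * \prod_(r | (r != s) && (r != t)) D r.
have c_sym s t : c s t = c t s.
  rewrite /c /code (edge_code_sym C_sym).
  by congr (_ * _); apply: eq_bigl => r; rewrite andbC.
exists (interp_poly c); split; first exact: interp_poly_sym.
left; exists (@node P).
apply: equiv_via_code.
apply: (equiv_via_of_eq (phi := fun n : nat => n%:Z * \prod_r D r)); first exact: node_inj.
  by move=> m n /(mulIf D_neq0) [].
by move=> p q /eqP pq; rewrite interp_polyE /c (bigD2 _ _ pq) /=; ring.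
Qed.

End FiniteCographs.

Theorem theorem1p1 :
  (* (1) every cograph is equivalent to a fat intersection cograph *)
  (forall (P E : Type) (C : P -> P -> E), is_cograph C ->
     exists (X : Type) (pts : P -> (X -> Prop)) (S : (X -> Prop) -> Prop),
       fat_intersection pts S /\ equiv_via C pts (fat_edge S)) /\
  (* (2a) every finite cograph is equivalent to an inner product cograph *)
  (forall (P : finType) (E : Type) (C : P -> P -> E), is_cograph C ->
     exists (V : lmodType R) (ip : V -> V -> R) (f : P -> V),
       is_inner_product ip /\ equiv_via C f ip) /\
  (* (2b) every finite cograph is equivalent to a polynomial cograph *)
  (forall (P : finType) (E : Type) (C : P -> P -> E), is_cograph C ->
     exists g : {mpoly int[2]}, g \is symmetric /\
       ((exists f : P -> int, equiv_via C f (poly_cog_Z g)) \/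
        (exists (m : nat) (f : P -> 'Z_m),
           (1 < m)%nat /\ equiv_via C f (poly_cog_Zm g)))) /\
  (* (3) every finite cograph is equivalent to a geometric cograph in R^d *)
  (forall (P : finType) (E : Type) (C : P -> P -> E), is_cograph C ->
     exists (d : nat) (f : P -> 'rV[R]_d), equiv_via C f (@euclid_dist d)).
Proof.
split; first by move=> P E C C_sym; exists _, (@incident P), (edge_system C); split;
  [exact: fat_intersection_edge|exact: equiv_via_incident].
split; first by move=> P E C C_sym; apply: inner_product_cograph.
split; first by move=> P E C C_sym; apply: polynomial_cograph.
by move=> P E C C_sym; apply: geometric_cograph.
Qed.
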